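(* Let $N,M,k$ be positive integers, and for $x\in\mathbb{Z}_N^k$, $w\in\mathbb{Z}_N$ let $\eta^x_w:=|\{b\in\{0,\ldots,M-1\}^k : b\cdot x\equiv w \pmod N\}|$. Define $$P:=\frac{1}{M^kN^{k+1}}\sum_{x\in\mathbb{Z}_N^k}\Big(\sum_{w\in\mathbb{Z}_N}\sqrt{\eta^x_w}\Big)^2 .$$ Suppose $\alpha,\beta>0$ are such that $\Pr(\eta^x_w\ge\alpha)\ge\beta$ when $x\in\mathbb{Z}_N^k$ and $w\in\mathbb{Z}_N$ are chosen independently and uniformly at random. Then $\alpha\beta^2N/M^k\le P\le M^k/N$.
   Context: $P$ is the success probability of the pretty good measurement for identifying the hidden shift from $k$ copies of the generalized hidden shift states. $b\cdot x=\sum_{i=1}^k b_ix_i$. *)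

From mathcomp Require Import all_boot all_order all_algebra.
Set Implicit Arguments. Unset Strict Implicit. Unset Printing Implicit Defensive.
Import Order.TTheory GRing.Theory Num.Theory.
Local Open Scope ring_scope.

(* Z_N is represented by 'I_N (residues 0..N-1), N >= 1; Z_N^k by {ffun 'I_k -> 'I_N};
   b ranges over {0,...,M-1}^k = {ffun 'I_k -> 'I_M}. *)

Definition eta (N M k : nat) (x : {ffun 'I_k -> 'I_N}) (w : 'I_N) : nat :=
  #|[set b : {ffun 'I_k -> 'I_M} | ((\sum_(i < k) b i * x i) %% N)%N == w]|.

Definition Psucc (R : rcfType) (N M k : nat) : R :=
  (M%:R ^+ k * N%:R ^+ k.+1)^-1 *
  \sum_(x : {ffun 'I_k -> 'I_N}) (\sum_(w : 'I_N) Num.sqrt ((eta M x w)%:R)) ^+ 2.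

Definition prob_eta_ge (R : rcfType) (N M k : nat) (alpha : R) : R :=
  #|[set xw : {ffun 'I_k -> 'I_N} * 'I_N | alpha <= (eta M xw.1 xw.2)%:R]|%:R
  / (N%:R ^+ k.+1).

From mathcomp Require Import all_boot all_order all_algebra.
From mathcomp Require Import ring.
Set Implicit Arguments. Unset Strict Implicit. Unset Printing Implicit Defensive.
Import Order.TTheory GRing.Theory Num.Theory.
Local Open Scope ring_scope.

(* For each x the numbers eta^x_w partition the M^k vectors b, so the inner
   sum of square roots is at most M^k, which gives the upper bound.  For the
   lower bound, the inner sum is at least sqrt(alpha) times the number c_x of
   w with eta^x_w >= alpha; Cauchy-Schwarz over the N^k vectors x bounds
   sum_x c_x^2 below by (sum_x c_x)^2 / N^k, and sum_x c_x >= beta N^(k+1) by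
   hypothesis. *)

Lemma sqr_sum_le_card_mul_sum_sqr (R : realFieldType) (I : finType) (c : I -> R) :
  (\sum_i c i) ^+ 2 <= #|I|%:R * \sum_i c i ^+ 2.
Proof.
set S := \sum_i c i; set n : R := #|I|%:R.
have [I0 | I_gt0] := eqVneq #|I| 0%N.
  have -> : S = 0 by rewrite /S big_pred0 // => i; have := card0_eq I0 i.
  by rewrite expr0n /= /n I0 mul0r.
have n_gt0 : 0 < n by rewrite ltr0n lt0n.
have var_ge0 : 0 <= \sum_i (n * c i - S) ^+ 2.
  by apply: sumr_ge0 => i _; exact: sqr_ge0.
have var_expand : \sum_i (n * c i - S) ^+ 2 = n * (n * \sum_i c i ^+ 2 - S ^+ 2).
  transitivity (\sum_i (n ^+ 2 * c i ^+ 2 - (2 * n * S) * c i + S ^+ 2)).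
    by apply: eq_bigr => i _; ring.
  rewrite !big_split /= sumrN -!mulr_sumr sumr_const -/S -mulr_natl -/n.
  ring.
by move: var_ge0; rewrite var_expand pmulr_rge0 // subr_ge0.
Qed.

Lemma sqrt_count_ge_le_sum_sqrt (R : rcfType) (I : finType) (f : I -> R) (a : R) :
  Num.sqrt a * #|[set i | a <= f i]|%:R <= \sum_i Num.sqrt (f i).
Proof.
rewrite mulr_natr -sumr_const big_mkcond /=.
apply: ler_sum => i _; case: ifP => [|_]; last exact: sqrtr_ge0.
by rewrite inE => /ler_wsqrtr.
Qed.

Lemma sqrt_nat_le (R : rcfType) (n : nat) : Num.sqrt (n%:R : R) <= n%:R.
Proof.
have n_le_sqr : (n%:R : R) <= n%:R ^+ 2.
  by rewrite -natrX ler_nat; case: n => // n; rewrite leq_pmulr.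
by apply: le_trans (ler_wsqrtr n_le_sqr) _; rewrite sqrtr_sqr ger0_norm.
Qed.

Section EtaSums.

Variables (N M k : nat).
Hypothesis N_gt0 : (0 < N)%N.

Lemma sum_eta (x : {ffun 'I_k -> 'I_N}) : (\sum_(w : 'I_N) eta M x w = M ^ k)%N.
Proof.
have -> : (M ^ k = #|{ffun 'I_k -> 'I_M}|)%N by rewrite card_ffun !card_ord.
have eta_sum1 w : eta M x w = (\sum_(b : {ffun 'I_k -> 'I_M}
    | ((\sum_(i < k) b i * x i) %% N)%N == w) 1)%N.
  by rewrite /eta sum1_card cardsE.
under eq_bigr => w _ do rewrite eta_sum1.
rewrite -sum1_card (exchange_big_dep predT) //=.
apply: eq_bigr => b _.
have v_lt : ((\sum_(i < k) b i * x i) %% N < N)%N by rewrite ltn_mod.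
rewrite (bigD1 (Ordinal v_lt)) ?eqxx //= big1 ?addn0 // => w /andP[/eqP vw].
by rewrite -val_eqE /= vw eqxx.
Qed.

Lemma card_eta_ge (R : rcfType) (alpha : R) :
  #|[set xw : {ffun 'I_k -> 'I_N} * 'I_N | alpha <= (eta M xw.1 xw.2)%:R]|
  = (\sum_(x : {ffun 'I_k -> 'I_N}) #|[set w : 'I_N | (alpha <= (eta M x w)%:R)%R]|)%N.
Proof.
rewrite cardsE -sum1_card.
transitivity (\sum_(x : {ffun 'I_k -> 'I_N})
                \sum_(w : 'I_N | (alpha <= (eta M x w)%:R)%R) 1)%N.
  by rewrite pair_big_dep.
by apply: eq_bigr => x _; rewrite sum1_card cardsE.
Qed.

Variable R : rcfType.

Definition sqrt_eta_sum (x : {ffun 'I_k -> 'I_N}) : R :=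
  \sum_(w : 'I_N) Num.sqrt ((eta M x w)%:R).

Lemma sqrt_eta_sum_ge0 x : 0 <= sqrt_eta_sum x.
Proof. by apply: sumr_ge0 => w _; exact: sqrtr_ge0. Qed.

Lemma sqrt_eta_sum_le x : sqrt_eta_sum x <= M%:R ^+ k.
Proof.
apply: le_trans (_ : \sum_(w : 'I_N) (eta M x w)%:R <= _).
  by apply: ler_sum => w _; exact: sqrt_nat_le.
by rewrite -natr_sum sum_eta natrX.
Qed.

Lemma sum_sqr_sqrt_eta_sum_le :
  \sum_x sqrt_eta_sum x ^+ 2 <= N%:R ^+ k * (M%:R ^+ k) ^+ 2 :> R.
Proof.
apply: le_trans (_ : \sum_(x : {ffun 'I_k -> 'I_N}) (M%:R ^+ k) ^+ 2 <= _).
  apply: ler_sum => x _.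
  by rewrite ler_pXn2r ?nnegrE ?sqrt_eta_sum_ge0 ?exprn_ge0 ?sqrt_eta_sum_le.
by rewrite sumr_const card_ffun !card_ord -[_ *+ _]mulr_natl natrX.
Qed.

Lemma sum_sqr_sqrt_eta_sum_ge (alpha beta : R) :
  0 <= alpha -> 0 <= beta -> beta <= prob_eta_ge N M k alpha ->
  alpha * (beta * N%:R ^+ k.+1) ^+ 2 <= N%:R ^+ k * \sum_x sqrt_eta_sum x ^+ 2.
Proof.
move=> alpha_ge0 beta_ge0 hbeta.
set c := fun x : {ffun 'I_k -> 'I_N} =>
  (#|[set w : 'I_N | alpha <= (eta M x w)%:R]|%:R : R).
have sqr_c_le x : alpha * c x ^+ 2 <= sqrt_eta_sum x ^+ 2.
  have := sqrt_count_ge_le_sum_sqrt (fun w => (eta M x w)%:R : R) alpha.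
  rewrite -(ler_pXn2r (n := 2)) ?nnegrE ?sqrt_eta_sum_ge0 ?mulr_ge0 ?sqrtr_ge0 //.
  by rewrite exprMn sqr_sqrtr.
have sum_c_ge : beta * N%:R ^+ k.+1 <= \sum_x c x.
  by rewrite -natr_sum -card_eta_ge -ler_pdivlMr ?exprn_gt0 ?ltr0n.
have CS := sqr_sum_le_card_mul_sum_sqr c.
rewrite card_ffun !card_ord natrX in CS.
have lhs_ge0 : 0 <= beta * N%:R ^+ k.+1 by rewrite mulr_ge0 ?exprn_ge0.
apply: le_trans (_ : alpha * (\sum_x c x) ^+ 2 <= _).
  by apply: ler_wpM2l; rewrite // ler_pXn2r ?nnegrE ?(le_trans lhs_ge0).
apply: le_trans (ler_wpM2l alpha_ge0 CS) _.
rewrite mulrCA; apply: ler_wpM2l; first by rewrite exprn_ge0.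
by rewrite mulr_sumr; apply: ler_sum => x _.
Qed.

Lemma PsuccE :
  Psucc R N M k = (\sum_x sqrt_eta_sum x ^+ 2) / (M%:R ^+ k * N%:R ^+ k.+1).
Proof. exact: mulrC. Qed.

End EtaSums.

Theorem lemma1 (R : rcfType) (N M k : nat) (alpha beta : R) :
  (0 < N)%N -> (0 < M)%N -> (0 < k)%N ->
  0 < alpha -> 0 < beta ->
  beta <= prob_eta_ge N M k alpha ->
  alpha * beta ^+ 2 * N%:R / M%:R ^+ k <= Psucc R N M k /\
  Psucc R N M k <= M%:R ^+ k / N%:R.
Proof.
move=> N_gt0 M_gt0 _ alpha_gt0 beta_gt0 hbeta.
have NR_gt0 : (0 : R) < N%:R by rewrite ltr0n.
have Mk_gt0 : (0 : R) < M%:R ^+ k by rewrite exprn_gt0 ?ltr0n.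
have Nk_gt0 : (0 : R) < N%:R ^+ k := exprn_gt0 k NR_gt0.
have D_gt0 : (0 : R) < M%:R ^+ k * N%:R ^+ k.+1.
  exact: mulr_gt0 Mk_gt0 (exprn_gt0 _ NR_gt0).
rewrite PsuccE; split.
- rewrite ler_pdivlMr // -(ler_pM2l Nk_gt0).
  suff -> : N%:R ^+ k * (alpha * beta ^+ 2 * N%:R / M%:R ^+ k * (M%:R ^+ k * N%:R ^+ k.+1))
          = alpha * (beta * N%:R ^+ k.+1) ^+ 2.
    exact: (sum_sqr_sqrt_eta_sum_ge N_gt0 (ltW alpha_gt0) (ltW beta_gt0) hbeta).
  rewrite [N%:R ^+ k.+1]exprSr.
  move: (M%:R ^+ k : R) (N%:R ^+ k : R) (gt_eqF Mk_gt0) (gt_eqF NR_gt0).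
  by move=> Mk Nk Mk_neq0 N_neq0; field; rewrite Mk_neq0.
- rewrite ler_pdivrMr //.
  suff -> : M%:R ^+ k / N%:R * (M%:R ^+ k * N%:R ^+ k.+1) = N%:R ^+ k * (M%:R ^+ k) ^+ 2 :> R.
    exact: sum_sqr_sqrt_eta_sum_le M k N_gt0 R.
  rewrite [N%:R ^+ k.+1]exprSr.
  move: (M%:R ^+ k : R) (N%:R ^+ k : R) (gt_eqF NR_gt0).
  by move=> Mk Nk N_neq0; field; rewrite N_neq0.
Qed.
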